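(* There is an absolute constant $c>0$ such that for all natural numbers $1\le d\le n$ there exists a partial concept class $\mathbb{H}_{n,d}\subseteq\{0,1,\star\}^{[n]}$ with $d\le\mathrm{LD}(\mathbb{H}_{n,d})\le d+1$ whose SOA disambiguation $\overline{\mathbb{H}_{n,d}}^{\mathrm{SOA}}$ (with respect to the natural ordering $1,2,\dots,n$ of $[n]$) has $\mathrm{VC}\big(\overline{\mathbb{H}_{n,d}}^{\mathrm{SOA}}\big)\ge c\, d\log(n/d)$.
   Context: A partial concept class on $[n]$ is a set $\mathbb{H}\subseteq\{0,1,\star\}^{[n]}$. VC dimension: the largest size of a set $S\subseteq[n]$ such that every $0/1$ pattern on $S$ is realized by some $h\in\mathbb{H}$. Littlestone dimension $\mathrm{LD}(\mathbb{H})$: the largest $d$ such that there is a full binary tree of height $d$, internal nodes $v\in\bigcup_{k<d}\{0,1\}^k$ labelled by points $x_v$, such that for every $y\in\{0,1\}^d$ some $h\in\mathbb{H}$ has $h(x_{y_1\cdots y_{i-1}})=y_i$ for all $i\in[d]$; by convention $\mathrm{LD}(\emptyset)=-1$. For a class $\mathbb{H}$ and $\vec b\in\{0,1,\star\}^k$ let $\mathbb{H}|_{\vec b}=\{h\in\mathbb{H}: h(i)=b_i \text{ for all } i\in[k]\}$ (with $\mathbb{H}|_{()}=\mathbb{H}$). The SOA disambiguation $\overline{\mathbb{H}}^{\mathrm{SOA}}$ is produced iteratively: for $k=1,2,\dots,n$, given the current class (in which all values at points $1,\dots,k-1$ are already in $\{0,1\}$), for every $\vec b\in\{0,1\}^{k-1}$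 choose $c\in\{0,1\}$ maximizing $\mathrm{LD}(\mathbb{H}|_{\vec b c})$ (ties broken in favour of $c=0$), and redefine $h(k):=c$ for every $h\in\mathbb{H}|_{\vec b\star}$. The resulting total class is $\overline{\mathbb{H}}^{\mathrm{SOA}}$. *)

From Stdlib Require Import ClassicalEpsilon.
From mathcomp Require Import all_boot all_order all_algebra.

Set Implicit Arguments.
Unset Strict Implicit.
Unset Printing Implicit Defensive.
Import Order.TTheory GRing.Theory Num.Theory.

(* Points of [n] are the ordinals 'I_n (point i+1 of the paper is i : 'I_n).
   Values {0,1,*} are encoded as option bool: Some false = 0, Some true = 1,
   None = * (undefined). *)
Definition concept (n : nat) := {ffun 'I_n -> option bool}.
Definition pclass (n : nat) := {set concept n}.

Definition shattered n (H : pclass n) (S : {set 'I_n}) : bool :=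
  [forall f : {ffun 'I_n -> bool},
     [exists h in H, [forall x in S, h x == Some (f x)]]].

Definition VC n (H : pclass n) : nat :=
  \max_(S : {set 'I_n} | shattered H S) #|S|.

(* A Littlestone (mistake) tree of height d: internal nodes v in {0,1}^k,
   k < d, are labelled by points T v; every branch y in {0,1}^d is realized
   by some h in H, i.e. h (T (y_1 ... y_{i-1})) = y_i for all i. *)
Definition has_ltree n (H : pclass n) (d : nat) : Prop :=
  exists T : seq bool -> 'I_n,
    forall y : d.-tuple bool,
      exists2 h, h \in H &
        forall i : 'I_d, h (T (take i y)) = Some (tnth y i).

Definition has_ltreeb n (H : pclass n) (d : nat) : bool :=
  if excluded_middle_informative (has_ltree H d) then true else false.

(* Littlestone dimension, with LD(empty) = -1.  For nonempty H over [n]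
   any Littlestone tree has height at most n (a point cannot repeat along
   a branch), so the maximum over heights d <= n is the true maximum. *)
Definition LD n (H : pclass n) : int :=
  if H == set0 then (-1)%R
  else Posz (\max_(d < n.+1 | has_ltreeb H d) d).

(* H|_{b c}: concepts of H agreeing with the (already total) prefix of h on
   the points before k, and taking value c at k. *)
Definition restrict_prefix n (H : pclass n) (h : concept n) (k : 'I_n)
    (c : option bool) : pclass n :=
  [set g in H | [forall i : 'I_n, (i < k)%N ==> (g i == h i)] && (g k == c)].

(* The SOA choice at step k for the prefix of h: c maximizing
   LD(H|_{b c}), ties broken in favour of 0 (= false). *)
Definition soa_choice n (H : pclass n) (h : concept n) (k : 'I_n) : bool :=
  (LD (restrict_prefix H h k (Some false)) < LD (restrict_prefix H h k (Some true)))%R.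

Definition soa_update n (H : pclass n) (k : 'I_n) (h : concept n) : concept n :=
  if h k is None
  then [ffun i => if i == k then Some (soa_choice H h k) else h i]
  else h.

Definition soa_step n (H : pclass n) (k : 'I_n) : pclass n :=
  [set soa_update H k h | h in H].

Definition SOA_disamb n (H : pclass n) : pclass n :=
  foldl (@soa_step n) H (enum 'I_n).

From Stdlib Require Import ClassicalEpsilon.
From mathcomp Require Import all_boot all_order all_algebra.
From mathcomp Require Import all_classical all_reals all_analysis.
From mathcomp Require Import Rstruct.
From mathcomp Require Import zify.
From mathcomp Require Import finset fintype.
Import Order.TTheory GRing.Theory Num.Theory.

(* For n >= 4d choose l >= 1 with d (2^l + l) <= n < 2^(l+2) d and split [n]
   into d selector groups of 2^l points, d*l pattern points, and padding.
   A code a assigns a word a_t in {0,1}^l to each group t; the concept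
   indexed by (a, p) is 1, in each group t, exactly at the point numbered
   by a_t; it shows bit j of a_t at pattern point p = (t, j) if p is a pattern point,
   is undefined on the other pattern points, and is 0 on the padding.
   - LD >= d: the selector groups realise every branch of a tree of height d.
   - LD <= d + 1: a concept has at most d + 1 ones, while a Littlestone tree
     of height D makes its all-ones branch hit D distinct points.
   - The selector points come first and determine the code, so when SOA
     reaches a pattern point only the side carrying the code's bit is
     nonempty; SOA therefore fills in the whole code, and the filled class
     shatters the d*l pattern points.
   For n < 4d the cube on the first d points suffices.  Both regimes give
   (1/6) d ln (n/d) <= VC through the bound ln (n/d) <= 2K when n < 2^K d. *)

Set Implicit Arguments. Unset Strict Implicit. Unset Printing Implicit Defensive.

Section Generic.
Variable n : nat.

Definition is_ltree (H : pclass n) (D : nat) (T : seq bool -> 'I_n) : Prop :=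
  forall y : D.-tuple bool,
    exists2 h, h \in H & forall i : 'I_D, h (T (take i y)) = Some (tnth y i).

Lemma has_ltreebE (H : pclass n) D : has_ltreeb H D = true <-> has_ltree H D.
Proof. by rewrite /has_ltreeb; case: excluded_middle_informative. Qed.

Lemma LD_set0 : LD (set0 : pclass n) = (-1)%R.
Proof. by rewrite /LD eqxx. Qed.

Lemma LD_ge0 (H : pclass n) : H != set0 -> (0 <= LD H)%R.
Proof. by move=> /negbTE hH; rewrite /LD hH. Qed.

Lemma flip_prefix D (j : 'I_D) s : s <= j ->
  take s (mktuple (fun k : 'I_D => k != j)) = take s (nseq D true).
Proof.
move=> lesj; apply: (@eq_from_nth _ false).
  by rewrite !size_take size_tuple size_nseq.
move=> r; rewrite size_take size_tuple => hr.
have rs : r < s by move: hr; case: (ltnP s D) => // hDs hr; exact: leq_trans hr hDs.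
have rD : r < D by apply: leq_trans rs (leq_trans lesj (ltnW (ltn_ord j))).
rewrite !nth_take // nth_nseq rD (nth_mktuple _ _ (Ordinal rD)).
by apply/eqP => /(congr1 val) /= erj; move: (leq_trans rs lesj); rewrite erj ltnn.
Qed.

(* Along the all-ones branch a Littlestone tree visits pairwise distinct
   points: if two nodes i < j carried the same point, the branch flipped at j
   would need value 1 and 0 there. *)
Lemma ltree_spine_inj (H : pclass n) D T : is_ltree H D T ->
  injective (fun i : 'I_D => T (take i (nseq D true))).
Proof.
move=> hT; set x := fun i : 'I_D => _.
suff key : forall i j : 'I_D, i < j -> x i != x j.
  move=> i j eij; case: (ltngtP i j) => [lt|lt|/val_inj //].
    by move: (key _ _ lt); rewrite eij eqxx.
  by move: (key _ _ lt); rewrite eij eqxx.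
move=> i j ltij; apply/eqP => eij.
have [h _ hh] := hT (mktuple (fun k : 'I_D => k != j)).
have := hh i; have := hh j.
rewrite !flip_prefix ?(ltnW ltij) // -/(x i) -/(x j) eij => ->.
rewrite !(tnth_nth false) !nth_mktuple eqxx => -[] /esym /eqP.
by move=> eq_ij; move: ltij; rewrite eq_ij ltnn.
Qed.

(* If every concept has at most M ones, every Littlestone tree has height
   at most M: the concept realising the all-ones branch is 1 on its spine. *)
Lemma ltree_ones (H : pclass n) D M :
  (forall h, h \in H -> #|[set i | h i == Some true]| <= M) ->
  has_ltree H D -> D <= M.
Proof.
move=> hM [T hT]; have [h hH hh] := hT [tuple of nseq D true].
pose spine := fun i : 'I_D => T (take i (nseq D true)).
have spine_ones : [set spine i | i : 'I_D] \subset [set i | h i == Some true].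
  by apply/subsetP => z /imsetP [i _ ->]; rewrite inE hh tnth_nseq.
have := subset_leq_card spine_ones.
rewrite card_imset ?card_ord; last exact: ltree_spine_inj hT.
by move=> /leq_trans; apply; apply: hM.
Qed.

(* A family of d points realised in all 2^d patterns yields a Littlestone
   tree of height d (label every node of depth i by the i-th point). *)
Lemma ltree_of_shatter (H : pclass n) D (p : 'I_D -> 'I_n) (x0 : 'I_n) :
  (forall y : D.-tuple bool,
     exists2 h, h \in H & forall i, h (p i) = Some (tnth y i)) ->
  has_ltree H D.
Proof.
move=> hy; exists (fun s => if insub (size s) is Some i then p i else x0).
move=> y; have [h hH hh] := hy y; exists h => // i.
suff -> : insub (size (take i y)) = Some i by apply: hh.
by rewrite size_take size_tuple ltn_ord valK.
Qed.

Lemma LD_bounds (H : pclass n) d : H != set0 -> d <= n -> has_ltree H d ->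
  (forall D, has_ltree H D -> D <= d.+1) -> (Posz d <= LD H <= Posz d + 1)%R.
Proof.
move=> hne dn hd hD; have -> : (Posz d + 1)%R = Posz d.+1 by rewrite -addn1 PoszD.
rewrite /LD (negbTE hne) !lez_nat.
apply/andP; split.
  apply: (@leq_bigmax_cond _ (fun D : 'I_n.+1 => has_ltreeb H D) _ (Ordinal (n:=n.+1) dn)).
  exact/has_ltreebE.
by apply/bigmax_leqP => i /has_ltreebE /hD.
Qed.

Lemma VC_ge (H : pclass n) S : shattered H S -> #|S| <= VC H.
Proof. exact: (@leq_bigmax_cond _ (shattered H) (fun S0 => #|S0|)). Qed.

(* When only one value c leaves a nonempty restricted class, SOA picks c
   (an empty side has LD -1 < 0). *)
Lemma soa_choice_forced (H : pclass n) h k c :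
  restrict_prefix H h k (Some c) != set0 ->
  restrict_prefix H h k (Some (~~ c)) = set0 ->
  soa_choice H h k = c.
Proof.
move=> live dead; have := LD_ge0 live; rewrite /soa_choice.
case: c live dead => _ /= ->; rewrite LD_set0 => ge0.
  exact: lt_le_trans ge0.
by apply/negbTE; rewrite -leNgt; apply: le_trans ge0.
Qed.

Lemma SOA_disamb_invariant (F : nat -> pclass n) :
  (forall k : 'I_n, soa_step (F k) k = F k.+1) -> SOA_disamb (F 0) = F n.
Proof.
move=> hstep; rewrite /SOA_disamb.
suff run : forall (s : seq 'I_n) t, map val s = iota t (size s) ->
    foldl (@soa_step n) (F t) s = F (t + size s).
  by rewrite run ?val_enum_ord size_enum_ord.
elim=> [|k s IH] t /=; first by rewrite addn0.
by case=> <- hs; rewrite hstep IH // addSnnS.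
Qed.

Lemma SOA_total (H : pclass n) :
  (forall h, h \in H -> forall i, h i != None) -> SOA_disamb H = H.
Proof.
move=> total; apply: (@SOA_disamb_invariant (fun=> H)) => k.
apply/setP => h; apply/imsetP/idP => [[g gH ->]|hH]; last exists h => //.
  by rewrite /soa_update; case E: (g k) => //; move: (total g gH k); rewrite E.
by rewrite /soa_update; case E: (h k) => //; move: (total h hH k); rewrite E.
Qed.

End Generic.

Section Block.
Variables n' d' l' : nat.
Local Notation n := n'.+1.
Local Notation d := d'.+1.
Local Notation l := l'.+1.
Local Notation word := {ffun 'I_l -> bool}.
(* Number of points per selector group: one per word, i.e. 2^l. *)
Definition group_size : nat := #|{: word}|.
Local Notation B := group_size.
Local Notation code := {ffun 'I_d -> word}.
Hypothesis fits : d * B + d * l <= n.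

Lemma group_size_gt0 : 0 < B.
Proof. by apply/card_gt0P; exists [ffun _ => false]. Qed.

(* Value of code a at selector point i: point i %% B of group i %/ B is 1
   iff it is the rank of the word assigned to that group. *)
Definition selector (a : code) (i : nat) : bool :=
  i %% B == enum_rank (a (inord (i %/ B))).

(* Bit of code a shown at pattern point i = d B + t l + j: bit j of the
   word of group t. *)
Definition pattern_bit (a : code) (i : nat) : bool :=
  a (inord ((i - d * B) %/ l)) (inord ((i - d * B) %% l)).

Definition in_pattern (i : nat) : bool := d * B <= i < d * B + d * l.

Definition block_concept (x : code * 'I_n) : concept n :=
  [ffun i : 'I_n => if i < d * B then Some (selector x.1 i)
    else if in_pattern i then (if i == x.2 then Some (pattern_bit x.1 i) else None)
    else Some false].

Definition Hblock : pclass n := [set block_concept x | x : code * 'I_n].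

(* The concept (a, p) after the first t SOA steps: undefined values before
   t have been replaced by the bits of a. *)
Definition filled (t : nat) (x : code * 'I_n) : concept n :=
  [ffun i : 'I_n => if (i < t) && (block_concept x i == None)
                    then Some (pattern_bit x.1 i) else block_concept x i].

Definition Hfilled (t : nat) : pclass n := [set filled t x | x : code * 'I_n].

Lemma group_point_lt (tt : 'I_d) r : r < B -> tt * B + r < d * B.
Proof.
move=> rB; apply: (@leq_trans (tt.+1 * B)); first by rewrite mulSn addnC ltn_add2r.
by rewrite leq_mul2r ltn_ord orbT.
Qed.

Lemma selector_group (a : code) (tt : 'I_d) r : r < B ->
  selector a (tt * B + r) = (r == enum_rank (a tt)).
Proof.
move=> rB; rewrite /selector modnMDl modn_small // divnMDl ?group_size_gt0 //.
by rewrite divn_small // addn0 inord_val.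
Qed.

Lemma selector_inj (a b : code) :
  (forall i, i < d * B -> selector a i = selector b i) -> a = b.
Proof.
move=> same; apply/ffunP => tt; have rB := ltn_ord (enum_rank (a tt)).
have := same _ (group_point_lt tt rB); rewrite !selector_group // eqxx.
by move=> /esym /eqP /val_inj /enum_rank_inj.
Qed.

Lemma block_undefined x (i : 'I_n) :
  block_concept x i = None -> in_pattern i && (i != x.2).
Proof.
by rewrite ffunE; case: ifP => // _; case: ifP => // _; case: eqP.
Qed.

Lemma filled0 : Hfilled 0 = Hblock.
Proof.
by apply: eq_imset => x; apply/ffunP => i; rewrite !ffunE.
Qed.

Lemma filledE t x i : filled t x i =
  if (i < t) && (block_concept x i == None) then Some (pattern_bit x.1 i)
  else block_concept x i.
Proof. by rewrite ffunE. Qed.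

Lemma filled_selector t x (i : 'I_n) : i < d * B -> filled t x i = Some (selector x.1 i).
Proof. by move=> hi; rewrite !ffunE hi andbF. Qed.

Lemma filled_pattern t x (i : 'I_n) : i < t -> in_pattern i ->
  filled t x i = Some (pattern_bit x.1 i).
Proof.
move=> it inpat; have /andP [lo _] := inpat.
by rewrite !ffunE it ltnNge lo /= inpat; case: (i == x.2).
Qed.

Lemma filled_late t x (i : 'I_n) : t <= i -> filled t x i = block_concept x i.
Proof. by move=> hi; rewrite ffunE ltnNge hi. Qed.

Section Step.
Variable pt : 'I_n.
Variable x : code * 'I_n.
Hypothesis inpat : in_pattern pt.

Let side (c : bool) : pclass n :=
  restrict_prefix (Hfilled pt) (filled pt x) pt (Some c).

Lemma witness_side : filled pt (x.1, pt) \in side (pattern_bit x.1 pt).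
Proof.
have /andP [lo hi] := inpat.
rewrite inE; apply/andP; split; first by apply/imsetP; exists (x.1, pt).
apply/andP; split; last by rewrite filled_late // ffunE ltnNge lo /= inpat eqxx.
apply/forallP => i; apply/implyP => ipt.
have [isel|iabove] := ltnP i (d * B); first by rewrite !filled_selector.
by rewrite !filled_pattern // /in_pattern iabove (ltn_trans ipt hi).
Qed.

(* No filled concept agrees with x on the prefix and shows the opposite
   bit: agreement on the selector points forces the same code. *)
Lemma other_side_empty : side (~~ pattern_bit x.1 pt) = set0.
Proof.
have /andP [lo _] := inpat.
apply/setP => g; rewrite inE in_set0; apply/negP => /andP [/imsetP [y _ ->]].
move=> /andP [/forallP agree]; rewrite filled_late // ffunE ltnNge lo /= inpat.
case: ifP => // _ /eqP [].
suff -> : y.1 = x.1 by case: (pattern_bit x.1 pt).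
apply: selector_inj => i isel.
have ilt : i < n by apply: leq_trans isel (leq_trans (leq_addr _ _) fits).
have := agree (Ordinal ilt); rewrite /= (leq_trans isel lo) /= !filled_selector //.
by move=> /eqP [].
Qed.

Lemma soa_fills_pattern : soa_choice (Hfilled pt) (filled pt x) pt = pattern_bit x.1 pt.
Proof.
apply: soa_choice_forced; last exact: other_side_empty.
by apply/set0Pn; exists (filled pt (x.1, pt)); apply: witness_side.
Qed.

End Step.

Lemma update_filled (pt : 'I_n) x :
  soa_update (Hfilled pt) pt (filled pt x) = filled pt.+1 x.
Proof.
have earlier (i : 'I_n) : i != pt -> (i < pt.+1) = (i < pt).
  by move=> ipt; rewrite ltnS leq_eqVlt; move: ipt; rewrite -val_eqE => /negbTE ->.
rewrite /soa_update; case E: (filled pt x pt) => [b|].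
  apply/ffunP => i; rewrite !filledE; case: (eqVneq i pt) => [->|ipt]; last by rewrite earlier.
  by move: E; rewrite filledE ltnn ltnSn /= => ->.
have undef : block_concept x pt = None by rewrite -E filled_late.
rewrite soa_fills_pattern; last by have /andP [] := block_undefined undef.
apply/ffunP => i; rewrite ffunE !filledE; case: (eqVneq i pt) => [->|ipt].
  by rewrite ltnSn undef.
by rewrite earlier.
Qed.

Lemma step_filled (pt : 'I_n) : soa_step (Hfilled pt) pt = Hfilled pt.+1.
Proof.
rewrite /soa_step /Hfilled -imset_comp.
by apply: eq_imset => x /=; rewrite update_filled.
Qed.

Lemma SOA_Hblock : SOA_disamb Hblock = Hfilled n.
Proof. by rewrite -filled0; apply: SOA_disamb_invariant step_filled. Qed.

Lemma selector_region_lt : d * B < n.+1.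
Proof. exact: leq_trans (leq_addr _ _) fits. Qed.

(* A concept has at most d + 1 ones: one per group and possibly p. *)
Lemma Hblock_ones h : h \in Hblock -> #|[set i | h i == Some true]| <= d.+1.
Proof.
case/imsetP => x _ ->.
pose chosen (tt : 'I_d) : 'I_n := inord (tt * B + enum_rank (x.1 tt)).
have ones : [set i | block_concept x i == Some true] \subset
            [set chosen tt | tt : 'I_d] :|: [set x.2].
  apply/subsetP => i; rewrite inE ffunE; case: ifP => isel.
    rewrite /selector => /eqP [] /eqP hr.
    have tlt : i %/ B < d by rewrite ltn_divLR ?group_size_gt0.
    rewrite inE; apply/orP; left; apply/imsetP; exists (inord (i %/ B)) => //.
    by apply/val_inj; rewrite /chosen /= -hr (inordK tlt) -divn_eq inordK.
  by case: ifP => // _; case: ifP => // /eqP -> _; rewrite inE set11 orbT.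
apply: leq_trans (subset_leq_card ones) _.
rewrite cardsU cards1; apply: leq_trans (leq_subr _ _) _; rewrite addn1 ltnS.
by apply: leq_trans (leq_imset_card _ _) _; rewrite card_ord.
Qed.

(* The selector groups carry a Littlestone tree of height d: the t-th node
   is the point of group t ranked by the all-zero word, which is 1 or 0
   according as group t is assigned the all-zero or the all-one word. *)
Lemma Hblock_tree : has_ltree Hblock d.
Proof.
pose w0 : word := [ffun _ => false]; pose w1 : word := [ffun _ => true].
have w01 : (enum_rank w0 == enum_rank w1 :> nat) = false.
  by apply/negbTE/negP => /eqP /val_inj /enum_rank_inj /ffunP /(_ ord0); rewrite !ffunE.
apply: (@ltree_of_shatter _ _ _ (fun tt : 'I_d => inord (tt * B + enum_rank w0)) ord0).
move=> y; exists (block_concept ([ffun tt => if tnth y tt then w0 else w1], ord0)).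
  by apply/imsetP; eexists.
move=> tt; have hlt := group_point_lt tt (ltn_ord (enum_rank w0)).
rewrite ffunE inordK ?(leq_trans hlt selector_region_lt) // hlt /= selector_group // ffunE.
by case: (tnth y tt); rewrite ?eqxx ?w01.
Qed.

Lemma LD_Hblock : (Posz d <= LD Hblock <= Posz d + 1)%R.
Proof.
apply: LD_bounds Hblock_tree _.
- by apply/set0Pn; exists (block_concept ([ffun _ => [ffun _ => false]], ord0)); apply/imsetP; eexists.
- by rewrite -ltnS; apply: leq_ltn_trans selector_region_lt; rewrite leq_pmulr ?group_size_gt0.
- by move=> D; apply: ltree_ones Hblock_ones.
Qed.

(* After SOA every code appears on the d*l pattern points, which are
   therefore shattered. *)
Lemma VC_Hblock : d * l <= VC (SOA_disamb Hblock).
Proof.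
rewrite SOA_Hblock.
pose pat (j : 'I_(d * l)) : 'I_n := inord (d * B + j).
have patE (j : 'I_(d * l)) : pat j = d * B + j :> nat.
  by rewrite inordK //; apply: leq_trans fits; rewrite ltn_add2l.
have card_pat : #|[set pat j | j : 'I_(d * l)]| = d * l.
  rewrite card_imset ?card_ord // => j j' /(congr1 (@nat_of_ord n)).
  by rewrite !patE => /addnI /val_inj.
rewrite -card_pat; apply: VC_ge; apply/forallP => f.
pose a : code := [ffun tt : 'I_d => [ffun s : 'I_l => f (pat (inord (tt * l + s)))]].
apply/existsP; exists (filled n (a, ord0)); apply/andP; split.
  by apply/imsetP; eexists.
apply/forallP => z; apply/implyP => /imsetP [j _ ->].
rewrite filled_pattern ?ltn_ord //; last by rewrite /in_pattern patE leq_addr /= ltn_add2l.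
rewrite /pattern_bit patE addKn !ffunE.
have jd : j %/ l < d by rewrite ltn_divLR.
by rewrite !inordK ?ltn_pmod // -divn_eq inord_val.
Qed.

End Block.

Section Cube.
Variables n' d' : nat.
Local Notation n := n'.+1.
Local Notation d := d'.+1.
Hypothesis d_le_n : d <= n.

Definition cube_concept (f : {ffun 'I_d -> bool}) : concept n :=
  [ffun i : 'I_n => Some (if i < d then f (inord i) else false)].

Definition Hcube : pclass n := [set cube_concept f | f : {ffun 'I_d -> bool}].

Lemma cube_point (tt : 'I_d) : (inord tt : 'I_n) = tt :> nat.
Proof. by rewrite inordK // (leq_trans (ltn_ord tt) d_le_n). Qed.

Lemma cube_concept_low f (tt : 'I_d) : cube_concept f (inord tt) = Some (f tt).
Proof. by rewrite ffunE cube_point ltn_ord inord_val. Qed.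

(* d <= LD <= d + 1 for the cube (it has at most d ones). *)
Lemma LD_Hcube : (Posz d <= LD Hcube <= Posz d + 1)%R.
Proof.
apply: LD_bounds => //.
- by apply/set0Pn; exists (cube_concept [ffun _ => false]); apply/imsetP; eexists.
- apply: (@ltree_of_shatter _ _ _ (fun tt : 'I_d => inord tt) ord0) => y.
  exists (cube_concept [ffun tt => tnth y tt]); first by apply/imsetP; eexists.
  by move=> tt; rewrite cube_concept_low ffunE.
- move=> D hD; apply: (ltree_ones _ hD) => h /imsetP [f _ ->].
  have ones : [set i | cube_concept f i == Some true] \subset [set inord tt | tt : 'I_d].
    apply/subsetP => i; rewrite inE ffunE; case: ifP => // hi _.
    by apply/imsetP; exists (inord i) => //; apply: ord_inj; rewrite cube_point inordK.
  apply: leq_trans (subset_leq_card ones) _.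
  by apply: leq_trans (leq_imset_card _ _) _; rewrite card_ord.
Qed.

(* The cube is total, so SOA leaves it unchanged, and it shatters the
   first d points. *)
Lemma VC_Hcube : d <= VC (SOA_disamb Hcube).
Proof.
rewrite SOA_total; last by move=> h /imsetP [f _ ->] i; rewrite ffunE.
have card_low : #|[set (inord tt : 'I_n) | tt : 'I_d]| = d.
  rewrite card_imset ?card_ord // => j j' /(congr1 (@nat_of_ord n)).
  by rewrite !cube_point => /val_inj.
rewrite -card_low; apply: VC_ge; apply/forallP => f.
apply/existsP; exists (cube_concept [ffun tt : 'I_d => f (inord tt)]).
apply/andP; split; first by apply/imsetP; eexists.
apply/forallP => z; apply/implyP => /imsetP [tt _ ->].
by rewrite cube_concept_low ffunE.
Qed.

End Cube.

Lemma cube_class n d : (0 < d)%N -> (d <= n)%N ->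
  exists H : pclass n, (Posz d <= LD H <= Posz d + 1)%R /\ (d <= VC (SOA_disamb H))%N.
Proof.
case: n => [|n']; case: d => [|d'] // _ dn.
by exists (Hcube n' d'); split; [apply: LD_Hcube | apply: VC_Hcube].
Qed.

Lemma block_class n d l : (0 < d)%N -> (0 < l)%N -> (d * (2 ^ l + l) <= n)%N ->
  exists H : pclass n,
    (Posz d <= LD H <= Posz d + 1)%R /\ (d * l <= VC (SOA_disamb H))%N.
Proof.
case: d => [|d'] //; case: l => [|l'] // _ _; case: n => [|n'] fits.
  by move: fits; rewrite addnS mulnS.
have group_fits : (d'.+1 * group_size l' + d'.+1 * l'.+1 <= n'.+1)%N.
  by rewrite /group_size card_ffun card_bool card_ord -mulnDr.
by exists (Hblock n' d' l'); split; [apply: LD_Hblock | apply: VC_Hblock].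
Qed.

(* For 4d <= n there is an l >= 1 with d (2^l + l) <= n < 2^(l+2) d:
   take l + 1 = floor (log2 (n / d)). *)
Lemma block_length n d : (0 < d)%N -> (4 * d <= n)%N ->
  exists l, [/\ (0 < l)%N, (d * (2 ^ l + l) <= n)%N & (n < 2 ^ l.+2 * d)%N].
Proof.
move=> d_gt0 large; set q := (n %/ d)%N.
have q_ge4 : (2 ^ 2 <= q)%N by rewrite leq_divRL // mulnC.
have [L [L_ge2 qL qL1]] : exists L, [/\ (2 <= L)%N, (2 ^ L <= q)%N & (q < 2 ^ L.+1)%N].
  exists (trunc_log 2 q); split; last exact: trunc_log_ltn.
    exact: trunc_log_max.
  by apply: trunc_logP => //; apply: leq_trans q_ge4.
case: L L_ge2 qL qL1 => [|l] // l_gt0 qL qL1; exists l; split => //.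
  apply: leq_trans (leq_divM n d); rewrite mulnC leq_mul2r -/q.
  apply/orP; right; apply: leq_trans qL; rewrite expnS mul2n -addnn leq_add2l.
  exact: ltnW (ltn_expl _ (ltnSn 1)).
by rewrite -ltn_divLR.
Qed.

Local Open Scope ring_scope.

(* n < 2^K d gives ln (n/d) <= K ln 2 <= 2K. *)
Lemma ln_ratio_le (n d K : nat) : (0 < d)%N -> (0 < n)%N -> (n < 2 ^ K * d)%N ->
  ln (n%:R / d%:R : Rdefinitions.R) <= (2 * K)%:R.
Proof.
move=> d0 n0 hK.
have dpos : 0 < (d%:R : Rdefinitions.R) by rewrite ltr0n.
have ratio_le : (n%:R / d%:R : Rdefinitions.R) <= 2 ^+ K.
  by rewrite ler_pdivrMr // -natrX -natrM ler_nat ltnW.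
apply: le_trans (_ : ln (2 ^+ K) <= _).
  by rewrite ler_ln // posrE ?divr_gt0 ?exprn_gt0 ?ltr0n.
rewrite lnXn // natrM -[X in X <= _]mulr_natr ler_wpM2r //.
exact/ltW/ln_sublinear.
Qed.

Lemma soa_bound (n d K V : nat) : (0 < d)%N -> (0 < n)%N -> (n < 2 ^ K * d)%N ->
  (d * K <= 3 * V)%N -> 1 / 6 * d%:R * ln (n%:R / d%:R) <= V%:R :> Rdefinitions.R.
Proof.
move=> d0 n0 nK dKV.
apply: le_trans (_ : 1 / 6 * d%:R * (2 * K)%:R <= _).
  by rewrite ler_wpM2l ?ln_ratio_le // mulr_ge0 // divr_ge0.
rewrite -mulrA -natrM -[V%:R](@mulKf _ 6) // div1r ler_wpM2l // -natrM ler_nat.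
by rewrite mulnCA -[6%N]/(2 * 3)%N -mulnA leq_mul2l.
Qed.

Theorem theorem1p9 :
  exists c : Rdefinitions.R, 0 < c /\
    forall n d : nat, (1 <= d)%N -> (d <= n)%N ->
      exists H : pclass n,
        (Posz d <= LD H <= Posz d + 1) /\
        c * d%:R * ln (n%:R / d%:R) <= (VC (SOA_disamb H))%:R.
Proof.
exists (1 / 6); split => // n d d_gt0 d_le_n.
have n_gt0 : (0 < n)%N := leq_trans d_gt0 d_le_n.
have [small | large] := ltnP n (4 * d).
  have [H [LD_H VC_H]] := cube_class d_gt0 d_le_n.
  exists H; split => //; apply: (@soa_bound n d 2) => //.
  by rewrite mulnC leq_mul.
have [l [l_gt0 fits n_lt]] := block_length d_gt0 large.
have [H [LD_H VC_H]] := block_class d_gt0 l_gt0 fits.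
exists H; split => //; apply: (@soa_bound n d l.+2) => //.
apply: leq_trans (leq_mul (leqnn 3) VC_H); rewrite mulnCA leq_mul2l.
by apply/orP; right; lia.
Qed.
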